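(* Let $K$ be a field, $R=K[x,y,z]$, and let $a,b,c$ be pairwise relatively prime positive integers. Set $S=K[x^a,y^b,z^c]$ and $L=abc$. Then the ideal $\mathfrak{a}=S_{\ge L}$ of $S$ is normal, that is, $\mathfrak{a}^t=S_{\ge tL}$ for all $t\ge1$.
   Context: $S$ is graded as a subring of $R$ with the standard grading $\deg x=\deg y=\deg z=1$, so $\deg(x^{ua}y^{vb}z^{wc})=ua+vb+wc$. For an $\mathbb{N}$-graded ring $A$ and positive integer $t$, $A_{\ge t}=\bigoplus_{s\ge t}A_s$; thus $S_{\ge m}$ is the ideal of $S$ spanned by the monomials $x^{ua}y^{vb}z^{wc}$ ($u,v,w\in\mathbb{N}$) with $ua+vb+wc\ge m$. *)

(* K[x,y,z] is modelled as {poly {poly {poly K}}}: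
   z is the outermost variable, y the middle, x the innermost. *)
From HB Require Import structures.
From mathcomp Require Import all_boot all_order all_algebra.
Set Implicit Arguments. Unset Strict Implicit. Unset Printing Implicit Defensive.
Import Order.TTheory GRing.Theory Num.Theory.
Local Open Scope ring_scope.

Definition poly3 (K : fieldType) := {poly {poly {poly K}}}.

Definition coef3 (K : fieldType) (f : poly3 K) (i j k : nat) : K :=
  ((f`_k)`_j)`_i.

Definition inS (K : fieldType) (a b c : nat) (f : poly3 K) : Prop :=
  forall i j k, coef3 f i j k != 0 -> [&& (a %| i)%N, (b %| j)%N & (c %| k)%N].

Definition inSge (K : fieldType) (a b c m : nat) (f : poly3 K) : Prop :=
  inS a b c f /\ forall i j k, coef3 f i j k != 0 -> (m <= i + j + k)%N.

(* t-th power of an ideal I (given as a predicate) of a commutative ring: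
   finite sums of products of t elements of I.  (For an ideal I of S, the
   ideal of S generated by t-fold products of elements of I is exactly
   this set, since S-multiples can be absorbed in one factor.) *)
Definition idealpow (A : comNzRingType) (I : A -> Prop) (t : nat) (f : A) : Prop :=
  exists ps : seq (seq A),
    (forall p, p \in ps -> size p = t /\ forall g, g \in p -> I g) /\
    f = \sum_(p <- ps) \prod_(g <- p) g.

From HB Require Import structures.
From mathcomp Require Import all_boot all_order all_algebra zify.
Import Order.TTheory GRing.Theory Num.Theory.

(* A monomial of S is x^(au) y^(bv) z^(cw); it lies in S_{>= m} iff its
   degree au + bv + cw is at least m.  Products of elements of S_{>= L}
   have degree >= tL, which gives the inclusion I^t <= S_{>= tL} for
   I = S_{>= L}.  For the
   converse it suffices, by linearity, to write every monomial of S of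
   degree >= tL as a product of t monomials of S of degree >= L.  This is
   a purely arithmetic statement about (u, v, w):

   - [split_off]: if au + bv + cw >= 2abc, one can peel off exponents
     u1 <= u, v1 <= v, w1 <= w with a u1 + b v1 + c w1 = abc exactly.
     Either one of the three pairs of variables can reach abc on its own
     ([pair_split]), or each pair is bounded ([pair_bound]); summing the
     three bounds contradicts au + bv + cw >= 2abc ([sym_bound]).
   - [weighted_decomposition]: iterating, a triple of weight >= t abc is a
     sum of t triples of weight >= abc.

   The
   polynomial part then expands f into monomials and checks closure of
   S_{>= m} under sums and products. *)

Definition weight (a b c : nat) (e : nat * nat * nat) : nat :=
  a * e.1.1 + b * e.1.2 + c * e.2.

(* The numerical inequality behind the contradiction in [split_off]. *)
Lemma sym_bound (a b c : nat) : 0 < a -> 0 < b -> 0 < c ->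
  a * b + b * c + c * a < a * b * c + 2 * (a + b + c).
Proof. by case: a => // a _; case: b => // b _; case: c => // c _; nia. Qed.

(* If the x^a- and y^b-parts together cannot reach degree abc on their own,
   their degree au + bv is at most ab(c + 1) - a - b. *)
Lemma pair_bound (a b c u v : nat) : 0 < a -> 0 < b -> u %/ b + v %/ a < c ->
  a * u + b * v + a + b <= a * b * c + a * b.
Proof.
move=> ha hb.
rewrite {2}(divn_eq u b) {2}(divn_eq v a).
have := ltn_pmod u hb; have := ltn_pmod v ha.
move: (u %/ b) (v %/ a) (u %% b) (v %% a) => p q r s; nia.
Qed.

Lemma pair_split (a b c u v : nat) : c <= u %/ b + v %/ a ->
  exists u1 v1, [/\ u1 <= u, v1 <= v & a * u1 + b * v1 = a * b * c].
Proof.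
move=> h; set p := minn c (u %/ b).
exists (b * p), (a * (c - p)); split.
- by apply: leq_trans (leq_divM u b); rewrite mulnC leq_mul2r geq_minr orbT.
- apply: leq_trans (leq_divM v a); rewrite mulnC leq_mul2r /p; apply/orP; right.
  by move: (u %/ b) (v %/ a) h => x y; lia.
- by rewrite mulnA (mulnCA b a) mulnA -mulnDr subnKC ?geq_minl.
Qed.

Lemma split_off (a b c u v w : nat) : 0 < a -> 0 < b -> 0 < c ->
  2 * (a * b * c) <= weight a b c (u, v, w) ->
  exists u1 v1 w1,
    [/\ u1 <= u, v1 <= v, w1 <= w & weight a b c (u1, v1, w1) = a * b * c].
Proof.
rewrite /weight /= => ha hb hc hD.
case: (leqP c (u %/ b + v %/ a)) => [/pair_split [u1 [v1 [? ? e]]]|h1].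
  by exists u1, v1, 0; rewrite muln0 addn0.
case: (leqP b (u %/ c + w %/ a)) => [/pair_split [u1 [w1 [? ? e]]]|h2].
  by exists u1, 0, w1; rewrite muln0 addn0 e mulnAC.
case: (leqP a (v %/ c + w %/ b)) => [/pair_split [v1 [w1 [? ? e]]]|h3].
  by exists 0, v1, w1; rewrite muln0 add0n e mulnC mulnA.
have := pair_bound a b c u v ha hb h1; have := pair_bound a c b u w ha hc h2.
have := pair_bound b c a v w hb hc h3; have := sym_bound a b c ha hb hc.
lia.
Qed.

Lemma weighted_decomposition (a b c : nat) : 0 < a -> 0 < b -> 0 < c ->
  forall t u v w, 0 < t -> t * (a * b * c) <= weight a b c (u, v, w) ->
  exists s : seq (nat * nat * nat), [/\ size s = t,
     all (fun e => a * b * c <= weight a b c e) s,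
     sumn (map (fun e => e.1.1) s) = u, sumn (map (fun e => e.1.2) s) = v
   & sumn (map (fun e => e.2) s) = w].
Proof.
move=> ha hb hc; elim=> [//|[|t] IH] u v w _ hD.
  by exists [:: (u, v, w)]; split; rewrite /= ?addn0 ?andbT // -(mul1n (a * b * c)).
have [u1 [v1 [w1 [hu hv hw e]]]] : exists u1 v1 w1,
    [/\ u1 <= u, v1 <= v, w1 <= w & weight a b c (u1, v1, w1) = a * b * c].
  by apply: split_off => //; apply: leq_trans hD; rewrite leq_mul2r orbT.
have hD' : t.+1 * (a * b * c) <= weight a b c (u - u1, v - v1, w - w1).
  move: hD e; rewrite /weight /= !mulnBr.
  have := leq_mul (leqnn a) hu; have := leq_mul (leqnn b) hv.
  have := leq_mul (leqnn c) hw; lia.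
have [s [hs hall hu' hv' hw']] := IH _ _ _ isT hD'.
exists ((u1, v1, w1) :: s); split => /=.
- by rewrite hs.
- by rewrite e leqnn hall.
- by rewrite hu' subnKC.
- by rewrite hv' subnKC.
- by rewrite hw' subnKC.
Qed.

Local Open Scope ring_scope.

Lemma sum_neq0_witness (V : nmodType) (I : Type) (r : seq I) (P : pred I)
    (F : I -> V) :
  \sum_(i <- r | P i) F i != 0 -> exists i, F i != 0.
Proof.
elim: r => [|x r IH]; first by rewrite big_nil eqxx.
rewrite big_cons; case: (P x) => //.
by case: (F x =P 0) => [->|/eqP nz _]; [rewrite add0r | exists x].
Qed.

Lemma poly_expand {R : nzSemiRingType} (p : {poly R}) :
  p = \sum_(i < size p) p`_i *: 'X^i.
Proof. by rewrite -{1}[p]coefK poly_def. Qed.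

Lemma scale_Xn_mul (R : comNzRingType) (p q : R) (n m : nat) :
  (p *: 'X^n : {poly R}) * (q *: 'X^m) = (p * q) *: 'X^(n + m).
Proof. by rewrite -scalerAl -scalerAr scalerA exprD. Qed.

Section Monomials.
Context {K : fieldType}.

Definition monomial (x : K) (i j k : nat) : poly3 K :=
  ((x *: 'X^i : {poly K}) *: ('X^j : {poly {poly K}})) *: ('X^k : poly3 K).

Lemma coef3_monomial (x : K) (i j k i' j' k' : nat) :
  coef3 (monomial x i j k) i' j' k' =
    if [&& i' == i, j' == j & k' == k] then x else 0.
Proof.
rewrite /coef3 /monomial coefZ coefXn.
have [_ | _] := eqVneq k' k; last by rewrite mulr0 !coef0 !andbF.
rewrite mulr1 coefZ coefXn.
have [_ | _] := eqVneq j' j; last by rewrite mulr0 !coef0 !andbF.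
rewrite mulr1 coefZ coefXn.
by have [_ | _] := eqVneq i' i; rewrite ?mulr1 ?mulr0.
Qed.

Lemma monomial_mul (x y : K) (i j k i' j' k' : nat) :
  monomial x i j k * monomial y i' j' k' =
    monomial (x * y) (i + i') (j + j') (k + k').
Proof. by rewrite /monomial !scale_Xn_mul. Qed.

Lemma monomial1 : monomial 1 0 0 0 = 1.
Proof. by rewrite /monomial !expr0 !scale1r. Qed.

Lemma monomial0 (i j k : nat) : monomial 0 i j k = 0.
Proof. by rewrite /monomial !scale0r. Qed.

Lemma poly3_expand (f : poly3 K) :
  f = \sum_(k < size f) \sum_(j < size f`_k) \sum_(i < size (f`_k)`_j)
        monomial (coef3 f i j k) i j k.
Proof.
rewrite {1}(poly_expand f); apply: eq_bigr => k _.
rewrite {1}(poly_expand f`_k) scaler_suml; apply: eq_bigr => j _.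
by rewrite {1}(poly_expand (f`_k)`_j) !scaler_suml.
Qed.

End Monomials.

Section GradedPieces.
Variables (K : fieldType) (a b c : nat).

Definition admissible (m i j k : nat) : bool :=
  [&& (a %| i)%N, (b %| j)%N, (c %| k)%N & (m <= i + j + k)%N].

Lemma inSgeP (m : nat) (f : poly3 K) :
  inSge a b c m f <-> forall i j k, coef3 f i j k != 0 -> admissible m i j k.
Proof.
split=> [[HS Hdeg] i j k nz | H].
  by rewrite /admissible; have /and3P [-> -> ->] := HS i j k nz; exact: Hdeg.
by split=> i j k /H /and4P [da db dc hdeg]; rewrite ?da ?db ?dc.
Qed.

Lemma inSge0 (m : nat) : inSge a b c m (0 : poly3 K).
Proof. by apply/inSgeP => i j k; rewrite /coef3 !coef0 eqxx. Qed.

Lemma inSge1 : inSge a b c 0 (1 : poly3 K).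
Proof.
apply/inSgeP => i j k; rewrite /coef3 coef1.
have [-> | _] := eqVneq k 0%N; last by rewrite !coef0 eqxx.
rewrite coef1; have [-> | _] := eqVneq j 0%N; last by rewrite coef0 eqxx.
by rewrite coef1; have [-> | _] := eqVneq i 0%N; rewrite ?eqxx // /admissible !dvdn0.
Qed.

Lemma inSgeD (m : nat) (f g : poly3 K) :
  inSge a b c m f -> inSge a b c m g -> inSge a b c m (f + g).
Proof.
move=> /inSgeP Hf /inSgeP Hg; apply/inSgeP => i j k; rewrite /coef3 !coefD.
have [e | nz] := eqVneq ((f`_k)`_j)`_i 0; last by move=> _; exact: Hf.
by rewrite e add0r; exact: Hg.
Qed.

Lemma inSgeM (m1 m2 : nat) (f g : poly3 K) :
  inSge a b c m1 f -> inSge a b c m2 g -> inSge a b c (m1 + m2) (f * g).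
Proof.
move=> /inSgeP Hf /inSgeP Hg; apply/inSgeP => i j k.
rewrite /coef3 coefM !coef_sum => /sum_neq0_witness [[k1 hk1]] /=.
rewrite coefM coef_sum => /sum_neq0_witness [[j1 hj1]] /=.
rewrite coefM => /sum_neq0_witness [[i1 hi1]] /=.
rewrite mulf_eq0 negb_or => /andP [/Hf /and4P [f1 f2 f3 f4] /Hg /and4P [g1 g2 g3 g4]].
rewrite !ltnS in hk1 hj1 hi1.
apply/and4P; split; last by move: f4 g4 hk1 hj1 hi1; clear; lia.
- by rewrite -(subnKC hi1) dvdn_add.
- by rewrite -(subnKC hj1) dvdn_add.
- by rewrite -(subnKC hk1) dvdn_add.
Qed.

Lemma inSge_prod (m : nat) (p : seq (poly3 K)) :
  (forall g, g \in p -> inSge a b c m g) ->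
  inSge a b c (size p * m) (\prod_(g <- p) g).
Proof.
elim: p => [|g p IH] H; first by rewrite big_nil mul0n; exact: inSge1.
rewrite big_cons mulSn; apply: inSgeM; first by apply: H; rewrite mem_head.
by apply: IH => q hq; apply: H; rewrite in_cons hq orbT.
Qed.

Lemma inSge_monomial (m : nat) (x : K) (i j k : nat) :
  admissible m i j k -> inSge a b c m (monomial x i j k).
Proof.
move=> adm; apply/inSgeP => i' j' k'; rewrite coef3_monomial.
by case: and3P => [[/eqP -> /eqP -> /eqP ->] | _]; rewrite ?eqxx.
Qed.

Lemma prod_monomials (s : seq (nat * nat * nat)) :
  \prod_(e <- s) monomial (1 : K) (a * e.1.1) (b * e.1.2) (c * e.2) =
  monomial 1 (a * sumn (map (fun e => e.1.1) s))
             (b * sumn (map (fun e => e.1.2) s)) (c * sumn (map (fun e => e.2) s)).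
Proof.
elim: s => [|e s IH]; first by rewrite big_nil /= !muln0 monomial1.
by rewrite big_cons IH monomial_mul mulr1 /= !mulnDr.
Qed.

End GradedPieces.

Section IdealPowers.
Variables (A : comNzRingType) (I : A -> Prop) (t : nat).

Lemma idealpow0 : idealpow I t 0.
Proof. by exists [::]; split => //; rewrite big_nil. Qed.

Lemma idealpowD (f g : A) : idealpow I t f -> idealpow I t g -> idealpow I t (f + g).
Proof.
move=> [ps [Hps ->]] [qs [Hqs ->]]; exists (ps ++ qs); split; last by rewrite big_cat.
by move=> p; rewrite mem_cat => /orP [] h; [exact: Hps | exact: Hqs].
Qed.

Lemma idealpow_sum (J : Type) (r : seq J) (F : J -> A) :
  (forall j, idealpow I t (F j)) -> idealpow I t (\sum_(j <- r) F j).
Proof. by move=> H; apply: big_ind => //; [exact: idealpow0 | exact: idealpowD]. Qed.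

End IdealPowers.

Lemma idealpow_inSge (K : fieldType) (a b c m t : nat) (f : poly3 K) :
  idealpow (inSge a b c m) t f -> inSge a b c (t * m) f.
Proof.
move=> [ps [Hps ->]]; elim: ps Hps => [|p ps IH] Hps.
  by rewrite big_nil; exact: inSge0.
rewrite big_cons; apply: inSgeD; last first.
  by apply: IH => q hq; apply: Hps; rewrite in_cons hq orbT.
by have [<- Hp] := Hps p (mem_head _ _); exact: inSge_prod.
Qed.

(* Each term of an element of S_{>= tL} is a product of t elements of
   S_{>= L}, by the weighted decomposition of its exponent. *)
Lemma monomial_idealpow (K : fieldType) (a b c t : nat) :
  (0 < a)%N -> (0 < b)%N -> (0 < c)%N -> (0 < t)%N ->
  forall (f : poly3 K) (i j k : nat), inSge a b c (t * (a * b * c)) f ->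
  idealpow (inSge a b c (a * b * c)) t (monomial (coef3 f i j k) i j k).
Proof.
move=> ha hb hc ht f i j k /inSgeP Hf; set x := coef3 f i j k.
have [-> | /Hf /and4P [da db dc hdeg]] := eqVneq x 0.
  by rewrite monomial0; exact: idealpow0.
rewrite -(divnK da) -(divnK db) -(divnK dc) in hdeg *.
move: (i %/ a)%N (j %/ b)%N (k %/ c)%N hdeg => u v w hdeg.
have hw : (t * (a * b * c) <= weight a b c (u, v, w))%N.
  by rewrite /weight /= (mulnC a u) (mulnC b v) (mulnC c w).
have [[|e0 s] [hs hall hu hv hw']] := weighted_decomposition a b c ha hb hc t u v w ht hw.
  by rewrite -hs in ht.
set factor := fun (y : K) (e : nat * nat * nat) =>
  monomial y (a * e.1.1) (b * e.1.2) (c * e.2).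
exists [:: factor x e0 :: map (factor 1) s]; split.
- move=> p; rewrite mem_seq1 => /eqP ->; split; first by rewrite /= size_map -hs.
  have adm e : (a * b * c <= weight a b c e)%N -> admissible a b c (a * b * c)
      (a * e.1.1) (b * e.1.2) (c * e.2) by rewrite /admissible !dvdn_mulr.
  move=> g; rewrite in_cons => /orP [/eqP -> | /mapP [e he ->]];
    apply/inSge_monomial/adm; first by case/andP: hall.
  by apply: (allP hall); rewrite in_cons he orbT.
- rewrite big_seq1 big_cons big_map prod_monomials monomial_mul mulr1 -!mulnDr.
  by move: hu hv hw' => /= -> -> ->; rewrite !(mulnC a) !(mulnC b) !(mulnC c).
Qed.

Theorem mainTheorem17 (K : fieldType) (a b c : nat)
  (ha : (0 < a)%N) (hb : (0 < b)%N) (hc : (0 < c)%N)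
  (hab : coprime a b) (hbc : coprime b c) (hac : coprime a c) :
  forall t : nat, (1 <= t)%N ->
    forall f : poly3 K,
      idealpow (inSge a b c (a * b * c)) t f <-> inSge a b c (t * (a * b * c)) f.
Proof.
move=> t ht f; split; first exact: idealpow_inSge.
move=> Hf; rewrite (poly3_expand f).
do 3 apply: idealpow_sum => ?.
exact: monomial_idealpow.
Qed.
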